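(* For a solid weak BCC-algebra $(X,*,0)$ the following conditions are equivalent: (a) $X$ is branchwise commutative; (b) $x*y=x*(y*(y*x))$ for all $x,y$ belonging to the same branch; (c) $x=y*(y*x)$ for all $x,y\in X$ with $x\leqslant y$; (d) $x*(x*y)=y*(y*(x*(x*y)))$ for all $x,y$ belonging to the same branch.
   Context: A weak BCC-algebra is a set $X$ with a binary operation $*$ and a constant $0$ satisfying, for all $x,y,z\in X$: (i) $((x*y)*(z*y))*(x*z)=0$; (ii) $x*x=0$; (iii) $x*0=x$; (iv) $x*y=y*x=0$ implies $x=y$. The relation $x\leqslant y$ iff $x*y=0$ is a partial order on $X$. Let $I(X)$ be the set of minimal elements of $X$ with respect to $\leqslant$. For $a\in I(X)$ the branch initiated by $a$ is $B(a)=\{x\in X: a\leqslant x\}$; ''belonging to the same branch'' means lying in a common $B(a)$. A weak BCC-algebra is called (left) solid if $(x*y)*z=(x*z)*y$ holds for all $x,y$ belonging to the same branch and all $z\in X$. It is called branchwise commutative if $x*(x*y)=y*(y*x)$ holds for all $x,y$ belonging to the same branch. *)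

Set Implicit Arguments.

Section WeakBCC.
Variables (X : Type) (op : X -> X -> X) (z : X).

Definition weak_BCC : Prop :=
  (forall x y w, op (op (op x y) (op w y)) (op x w) = z) /\
  (forall x, op x x = z) /\
  (forall x, op x z = x) /\
  (forall x y, op x y = z -> op y x = z -> x = y).

Definition bcc_le (x y : X) : Prop := op x y = z.

Definition bcc_minimal (a : X) : Prop := forall x, bcc_le x a -> x = a.

Definition in_branch (a x : X) : Prop := bcc_minimal a /\ bcc_le a x.

Definition same_branch (x y : X) : Prop :=
  exists a, in_branch a x /\ in_branch a y.

Definition solid : Prop :=
  forall x y w, same_branch x y -> op (op x y) w = op (op x w) y.

Definition branchwise_commutative : Prop :=
  forall x y, same_branch x y -> op x (op x y) = op y (op y x).

End WeakBCC.

From Corelib Require Import ssreflect.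
Set Implicit Arguments.

(* In a solid weak BCC-algebra, u := x * (x * y) lies below both x and y when x
   and y share a branch, and x * u = x * y.  Given (c), u <= y yields
   u = y * (y * u) <= y * (y * x) because * is antitone in its right argument;
   swapping x and y and using antisymmetry gives (a).  Conditions (b) and (d)
   are (c) read through u, and conversely reduce to (c) when x <= y. *)

Section WeakBCCAlgebra.
Variables (X : Type) (op : X -> X -> X) (z : X).
Hypothesis HX : weak_BCC op z.

Local Infix "⋆" := op (at level 40, left associativity).
Local Notation "x <= y" := (bcc_le op z x y).

Lemma bcc_opxx x : x ⋆ x = z.
Proof. by case: HX => _ [-> _]. Qed.

Lemma bcc_opx0 x : x ⋆ z = x.
Proof. by case: HX => _ [_ [-> _]]. Qed.

Lemma bcc_le_anti x y : x <= y -> y <= x -> x = y.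
Proof. by case: HX => _ [_ [_ anti]]; apply: anti. Qed.

Lemma bcc_le_refl x : x <= x.
Proof. exact: bcc_opxx. Qed.

Lemma bcc_le_trans x y w : x <= y -> y <= w -> x <= w.
Proof.
case: HX => ax _; rewrite /bcc_le => le_xy le_yw.
by have := ax x w y; rewrite le_yw le_xy !bcc_opx0.
Qed.

Lemma bcc_le_op2 x y w : y <= w -> x ⋆ w <= x ⋆ y.
Proof.
case: HX => ax _; rewrite /bcc_le => le_yw.
by have := ax x w y; rewrite le_yw bcc_opx0.
Qed.

Lemma bcc_le_00 x y : x <= y -> z ⋆ (z ⋆ y) <= x.
Proof.
case: HX => ax _; rewrite /bcc_le => le_xy.
by have := ax x y z; rewrite le_xy !bcc_opx0.
Qed.

Lemma bcc_00_le x : z ⋆ (z ⋆ x) <= x.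
Proof. exact/bcc_le_00/bcc_le_refl. Qed.

Lemma bcc_000 x : z ⋆ (z ⋆ (z ⋆ x)) = z ⋆ x.
Proof. exact/bcc_le_anti/bcc_le_op2/bcc_00_le/bcc_00_le. Qed.

Lemma bcc_minimal_00 x : bcc_minimal op z (z ⋆ (z ⋆ x)).
Proof.
move=> u le_u; apply: bcc_le_anti => //.
by have := bcc_le_00 le_u; rewrite bcc_000.
Qed.

Lemma same_branch_le x y : x <= y -> same_branch op z x y.
Proof.
move=> le_xy; exists (z ⋆ (z ⋆ x)).
split; split; try exact: bcc_minimal_00; first exact: bcc_00_le.
exact: bcc_le_trans (bcc_00_le x) le_xy.
Qed.

Lemma same_branch_refl x : same_branch op z x x.
Proof. exact/same_branch_le/bcc_le_refl. Qed.

Lemma same_branch_sym x y : same_branch op z x y -> same_branch op z y x.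
Proof. by case=> a [ax ay]; exists a. Qed.

Lemma same_branch_0_le_op x y : same_branch op z x y -> z <= x ⋆ y.
Proof.
case: HX => ax _; case=> a [[_ le_ax] [_ le_ay]].
by have := ax a y x; rewrite le_ay le_ax bcc_opx0.
Qed.

Lemma le_opK_of_opK_fixed :
  (forall x y, same_branch op z x y -> x ⋆ (x ⋆ y) = y ⋆ (y ⋆ (x ⋆ (x ⋆ y)))) ->
  forall x y, x <= y -> x = y ⋆ (y ⋆ x).
Proof.
move=> fixed x y le_xy.
by have := fixed x y (same_branch_le le_xy); rewrite le_xy bcc_opx0.
Qed.

Hypothesis Hsolid : solid op z.

Lemma solid_opK_le_r x y : same_branch op z x y -> x ⋆ (x ⋆ y) <= y.
Proof. by move=> xy; rewrite /bcc_le -Hsolid // bcc_opxx. Qed.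

Lemma solid_opK_le_l x y : same_branch op z x y -> x ⋆ (x ⋆ y) <= x.
Proof.
move=> xy; rewrite /bcc_le -(Hsolid _ (same_branch_refl x)) bcc_opxx.
exact: same_branch_0_le_op.
Qed.

Lemma solid_opKK x y : same_branch op z x y -> x ⋆ (x ⋆ (x ⋆ y)) = x ⋆ y.
Proof.
move=> xy; apply: bcc_le_anti; last exact/bcc_le_op2/solid_opK_le_r.
rewrite /bcc_le Hsolid ?bcc_opxx //.
exact/same_branch_sym/same_branch_le/solid_opK_le_l.
Qed.

Lemma solid_op_opK_of_commutative :
  branchwise_commutative op z ->
  forall x y, same_branch op z x y -> x ⋆ y = x ⋆ (y ⋆ (y ⋆ x)).
Proof.
by move=> comm x y xy; rewrite (comm y x (same_branch_sym xy)) solid_opKK.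
Qed.

Lemma solid_le_opK_of_op_opK :
  (forall x y, same_branch op z x y -> x ⋆ y = x ⋆ (y ⋆ (y ⋆ x))) ->
  forall x y, x <= y -> x = y ⋆ (y ⋆ x).
Proof.
move=> opK x y le_xy; apply: bcc_le_anti.
- by rewrite /bcc_le -(opK x y (same_branch_le le_xy)).
- exact/solid_opK_le_r/same_branch_sym/same_branch_le.
Qed.

Lemma solid_commutative_of_le_opK :
  (forall x y, x <= y -> x = y ⋆ (y ⋆ x)) -> branchwise_commutative op z.
Proof.
move=> le_opK.
have le_swap x y : same_branch op z x y -> x ⋆ (x ⋆ y) <= y ⋆ (y ⋆ x).
  move=> xy; rewrite (le_opK _ _ (solid_opK_le_r xy)).
  exact/bcc_le_op2/bcc_le_op2/solid_opK_le_l.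
by move=> x y xy; apply: bcc_le_anti; apply: le_swap => //; apply: same_branch_sym.
Qed.

Lemma solid_opK_fixed_of_le_opK :
  (forall x y, x <= y -> x = y ⋆ (y ⋆ x)) ->
  forall x y, same_branch op z x y -> x ⋆ (x ⋆ y) = y ⋆ (y ⋆ (x ⋆ (x ⋆ y))).
Proof. by move=> le_opK x y xy; apply/le_opK/solid_opK_le_r. Qed.

End WeakBCCAlgebra.

Theorem theorem3p6 (X : Type) (op : X -> X -> X) (z : X)
  (HX : weak_BCC op z) (Hsolid : solid op z) :
  let A := branchwise_commutative op z in
  let B := forall x y, same_branch op z x y -> op x y = op x (op y (op y x)) in
  let C := forall x y, bcc_le op z x y -> x = op y (op y x) in
  let D := forall x y, same_branch op z x y ->
             op x (op x y) = op y (op y (op x (op x y))) in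
  (A <-> B) /\ (A <-> C) /\ (A <-> D).
Proof.
move=> A B C D.
have AB : A -> B := solid_op_opK_of_commutative HX Hsolid.
have BC : B -> C := solid_le_opK_of_op_opK HX Hsolid.
have CA : C -> A := solid_commutative_of_le_opK HX Hsolid.
have CD : C -> D := solid_opK_fixed_of_le_opK HX Hsolid.
have DC : D -> C := le_opK_of_opK_fixed HX.
by split; [|split]; split; auto.
Qed.
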